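(* If $G\neq K_4$ is a connected, claw-free cubic graph, then there exists a vertex cover $P$ of $G$ such that every triangle of $G$ contains exactly two vertices from $P$.
   Context: A graph is claw-free if it has no induced subgraph isomorphic to $K_{1,3}$; it is cubic if every vertex has degree $3$. A vertex cover is a set of vertices meeting every edge. *)

From mathcomp Require Import all_boot.
Set Implicit Arguments. Unset Strict Implicit. Unset Printing Implicit Defensive.

Definition simple_graph (T : finType) (e : rel T) : Prop :=
  symmetric e /\ irreflexive e.

Definition neighbours (T : finType) (e : rel T) (x : T) : {set T} :=
  [set y | e x y].

Definition cubic (T : finType) (e : rel T) : Prop :=
  forall x : T, #|neighbours e x| = 3.

Definition connected_graph (T : finType) (e : rel T) : Prop :=
  forall x y : T, connect e x y.

Definition claw_free (T : finType) (e : rel T) : Prop :=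
  ~ exists x a b c : T,
      [/\ e x a, e x b, e x c & [/\ a != b, a != c, b != c &
          [/\ ~~ e a b, ~~ e a c & ~~ e b c]]].

Definition is_K4 (T : finType) (e : rel T) : Prop :=
  #|T| = 4 /\ forall x y : T, x != y -> e x y.

Definition vertex_cover (T : finType) (e : rel T) (P : {set T}) : Prop :=
  forall x y : T, e x y -> (x \in P) || (y \in P).

(* A triangle: three pairwise adjacent vertices (distinct, since e is irreflexive). *)
Definition triangle (T : finType) (e : rel T) (a b c : T) : Prop :=
  [/\ e a b, e a c & e b c].

From mathcomp Require Import all_boot.
Set Implicit Arguments. Unset Strict Implicit. Unset Printing Implicit Defensive.

(* Let the clusters be the classes of the equivalence generated by the edges
   lying on a triangle.  In a claw-free cubic graph other than K4 every vertex
   lies on a triangle, hence has at most one neighbour outside its cluster, and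
   every cluster is a triangle or a diamond K4 - e; either way it has at least
   two central vertices, i.e. vertices lying on all of its triangles.  Choose
   one central vertex per cluster greedily, continuing in the cluster of the
   outer neighbour y of the last chosen vertex with a central vertex other
   than y: the chosen set Q is independent, so its complement is a vertex cover,
   and it meets every triangle exactly once. *)

Lemma cards3 (T : finType) (a b c : T) :
  a != b -> a != c -> b != c -> #|[set a; b; c]| = 3.
Proof. by move=> ab ac bc; rewrite -setUA cardsU1 cards2 !inE negb_or ab ac bc. Qed.

Section IndependentTransversal.

Variables (T : finType) (e r : rel T) (good : T -> Prop).
Hypotheses (e_sym : symmetric e) (e_irr : irreflexive e).
Hypotheses (r_refl : reflexive r) (r_sym : symmetric r) (r_trans : transitive r).
Hypothesis good_mate : forall y, exists y', [/\ r y y', y' != y & good y'].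
Hypothesis outer_neighbour_uniq :
  forall u w1 w2, e u w1 -> e u w2 -> ~~ r u w1 -> ~~ r u w2 -> w1 = w2.

Let cls x := [set y | r x y].

Definition r_closed (A : {set T}) := forall x y, x \in A -> r x y -> y \in A.

Definition transversal (A Q : {set T}) :=
  [/\ Q \subset A, {in A, forall x, #|cls x :&: Q| = 1},
      {in Q &, forall x y, ~~ e x y} & {in Q, forall x, good x}].

Lemma r_closedD A u : r_closed A -> r_closed (A :\: cls u).
Proof.
move=> clA x y /setDP[xA xu] xy; rewrite !inE (clA x y xA xy) andbT.
by apply: contra xu; rewrite inE => uy; apply: r_trans uy _; rewrite r_sym.
Qed.

Lemma transversal_setU1 A Q u :
  r_closed A -> u \in A -> good u -> transversal (A :\: cls u) Q ->
  {in Q, forall q, ~~ e u q} -> transversal A (u |: Q).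
Proof.
move=> clA uA gu [sQ cQ iQ gQ] nadj; split.
- by rewrite subUset sub1set uA (subset_trans sQ) ?subsetDl.
- move=> x xA; rewrite setIUr; have [xu | xu] := boolP (r x u).
    have -> : cls x :&: Q = set0.
      apply/setP => w; rewrite !inE; apply/negbTE/andP => -[xw /(subsetP sQ)].
      by rewrite !inE => /andP[/negP[]]; apply: r_trans xw; rewrite r_sym.
    by rewrite setU0 (setIidPr _) ?cards1 // sub1set inE.
  have -> : cls x :&: [set u] = set0.
    apply/setP => w; rewrite !inE; apply/negbTE/andP => -[xw /eqP wu].
    by rewrite -wu xw in xu.
  by rewrite set0U cQ // !inE xA andbT r_sym.
- move=> x y /setU1P[-> | xQ] /setU1P[-> | yQ].
  + by rewrite e_irr.
  + exact: nadj.
  + by rewrite e_sym nadj.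
  + exact: iQ.
- by move=> x /setU1P[-> | /gQ].
Qed.

Lemma transversal_exists A :
  r_closed A -> {in A, forall u, good u -> exists2 Q, transversal A Q & u \in Q} ->
  exists Q, transversal A Q.
Proof.
move=> clA through; have [-> | [u uA]] := set_0Vmem A.
  by exists set0; split=> [|x|x y|x]; rewrite ?sub0set ?inE.
have [y' [uy' _ gy']] := good_mate u.
by have [Q tQ _] := through y' (clA u y' uA uy') gy'; exists Q.
Qed.

(* If u has a neighbour y in A, take Q through a good mate of y: then y is not
   in Q, and y is the only neighbour of u that could be. *)
Lemma transversal_avoiding A u :
  r_closed A -> {in A, forall y, ~~ r u y} ->
  {in A, forall v, good v -> exists2 Q, transversal A Q & v \in Q} ->
  exists2 Q, transversal A Q & {in Q, forall q, ~~ e u q}.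
Proof.
move=> clA ruA through.
case: (pickP (fun y => (y \in A) && e u y)) => [y /andP[yA uy] | noadj].
  have [y' [yy' y'y gy']] := good_mate y.
  have [Q tQ y'Q] := through y' (clA y y' yA yy') gy'.
  exists Q => // q qQ; apply/negP => uq; case: tQ => sQ cQ _ _.
  have qA := subsetP sQ q qQ.
  have qy : q = y := outer_neighbour_uniq uq uy (ruA q qA) (ruA y yA).
  have /eqP/cards1P[z clsyQ] := cQ y yA.
  have : y' \in cls y :&: Q by rewrite !inE yy'.
  have : y \in cls y :&: Q by rewrite !inE r_refl -qy.
  by rewrite clsyQ !inE => /eqP yz /eqP y'z; rewrite y'z -yz eqxx in y'y.
have [Q tQ] := transversal_exists clA through.
exists Q => // q qQ; case: tQ => sQ _ _ _.
by apply/negP => uq; have := noadj q; rewrite (subsetP sQ q qQ) uq.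
Qed.

Lemma transversal_through A :
  r_closed A -> {in A, forall u, good u -> exists2 Q, transversal A Q & u \in Q}.
Proof.
elim: {A}_.+1 {-2}A (ltnSn #|A|) => // n IH A; rewrite ltnS => leAn clA u uA gu.
have ltA : #|A :\: cls u| < n.
  apply: leq_trans leAn; apply/proper_card/properP; split; first exact: subsetDl.
  by exists u; rewrite // !inE r_refl.
have clAu := r_closedD (u := u) clA.
have [|Q tQ nadj] := transversal_avoiding (u := u) clAu _ (IH _ ltA clAu).
  by move=> y; rewrite !inE => /andP[].
by exists (u |: Q); [exact: transversal_setU1 | exact: setU11].
Qed.

Theorem independent_good_transversal :
  exists Q : {set T}, [/\ forall x, #|cls x :&: Q| = 1,
                         {in Q &, forall x y, ~~ e x y} & {in Q, forall x, good x}].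
Proof.
have clT : r_closed [set: T] by move=> x y; rewrite !inE.
have [Q [_ cQ iQ gQ]] := transversal_exists clT (transversal_through clT).
by exists Q; split=> // x; apply: cQ; rewrite inE.
Qed.

End IndependentTransversal.

Section ClawFreeCubic.

Variables (T : finType) (e : rel T).
Hypotheses (e_sym : symmetric e) (e_irr : irreflexive e).
Hypotheses (e_cubic : cubic e) (e_claw_free : claw_free e).
Hypotheses (e_connected : connected_graph e) (e_not_K4 : ~ is_K4 e).

Lemma adj_neq x y : e x y -> x != y.
Proof. by apply: contraTneq => ->; rewrite e_irr. Qed.

Lemma triangle_swap a b c : triangle e a b c -> triangle e a c b.
Proof. by case=> ab ac bc; split; rewrite // e_sym. Qed.

Lemma triangle_rot a b c : triangle e a b c -> triangle e b c a.
Proof. by case=> ab ac bc; split; rewrite // e_sym. Qed.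

Lemma neighboursE x a b c :
  e x a -> e x b -> e x c -> a != b -> a != c -> b != c ->
  neighbours e x = [set a; b; c].
Proof.
move=> xa xb xc ab ac bc; apply/esym/eqP; rewrite eqEcard e_cubic.
have -> : [set a; b; c] \subset neighbours e x.
  by apply/subsetP => y; rewrite !inE -orbA => /or3P[]/eqP->.
by rewrite cards3.
Qed.

Lemma three_neighbours x :
  exists a b c, [/\ e x a, e x b, e x c & [/\ a != b, a != c & b != c]].
Proof.
have /card_gt2P[a [b [c [[]]]]] : 2 < #|neighbours e x| by rewrite e_cubic.
rewrite !inE => xa xb xc [ab bc ca].
by exists a, b, c; split=> //; split; rewrite // eq_sym.
Qed.

Lemma triangle_through x : exists p q, triangle e x p q.
Proof.
have [a [b [c [xa xb xc [ab ac bc]]]]] := three_neighbours x.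
have [ab' | nab] := boolP (e a b); first by exists a, b.
have [ac' | nac] := boolP (e a c); first by exists a, c.
have [bc' | nbc] := boolP (e b c); first by exists b, c.
by case: e_claw_free; exists x, a, b, c.
Qed.

Lemma clique4_closed (D : {set T}) :
  #|D| = 4 -> {in D &, forall u v, u != v -> e u v} ->
  forall u v, e u v -> u \in D -> v \in D.
Proof.
move=> D4 cliqueD u v uv uD.
have Du3 : #|D :\ u| = 3 by move: D4; rewrite (cardsD1 u) uD => -[].
have DuN : D :\ u = neighbours e u.
  apply/eqP; rewrite eqEcard e_cubic Du3 leqnn andbT.
  by apply/subsetP => w /setD1P[wu wD]; rewrite inE cliqueD // eq_sym.
have : v \in neighbours e u by rewrite inE.
by rewrite -DuN => /setD1P[].
Qed.

Lemma K4_free x a b c : e x a -> e x b -> e x c -> e a b -> e a c -> ~~ e b c.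
Proof.
move=> xa xb xc ab ac; apply/negP => bc.
set D := [set x; a; b; c].
have cliqueD : {in D &, forall u v, u != v -> e u v}.
  move=> u v; rewrite !inE -!orbA => /or4P[]/eqP-> /or4P[]/eqP->;
    rewrite ?eqxx // => _; by rewrite // e_sym.
have D4 : #|D| = 4.
  rewrite /D -!setUA !cardsU1 cards1 !inE !negb_or.
  by rewrite (adj_neq xa) (adj_neq xb) (adj_neq xc) (adj_neq ab) (adj_neq ac) (adj_neq bc).
have inD y : y \in D.
  have clD := intro_closed (sym_connect_sym e_sym) (clique4_closed D4 cliqueD).
  by rewrite -(closed_connect clD (e_connected x y)) !inE eqxx.
apply: e_not_K4; split=> [|u v]; last exact: cliqueD.
by rewrite -D4; apply: eq_card => y; rewrite inD.
Qed.

Definition tri_adj : rel T := fun x y => e x y && [exists z, e x z && e y z].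

Definition cluster x := [set y | connect tri_adj x y].

Definition central q :=
  forall a b c, triangle e a b c -> a \in cluster q -> q \in [set a; b; c].

Lemma tri_adj_sym : symmetric tri_adj.
Proof.
move=> x y; rewrite /tri_adj e_sym; congr (_ && _).
by apply/existsP/existsP => -[z /andP[xz yz]]; exists z; rewrite xz yz.
Qed.

Lemma triangle_tri_adj a b c : triangle e a b c -> tri_adj a b.
Proof. by case=> ab ac bc; rewrite /tri_adj ab; apply/existsP; exists c; rewrite ac bc. Qed.

Lemma triangle_cluster a b c : triangle e a b c -> [set a; b; c] \subset cluster a.
Proof.
move=> abc; apply/subsetP => y; rewrite !inE -orbA => /or3P[]/eqP->; first exact: connect0.
  exact/connect1/(triangle_tri_adj abc).
exact/connect1/(triangle_tri_adj (triangle_swap abc)).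
Qed.

Lemma cluster_sub (S : {set T}) q :
  (forall u v, tri_adj u v -> u \in S -> v \in S) -> q \in S -> cluster q \subset S.
Proof.
move=> clS qS; apply/subsetP => y; rewrite inE.
by move/(closed_connect (intro_closed (sym_connect_sym tri_adj_sym) clS)) <-.
Qed.

Lemma central_of_closed (S : {set T}) q :
  (forall u v, tri_adj u v -> u \in S -> v \in S) -> q \in S ->
  (forall a b c, triangle e a b c -> [set a; b; c] \subset S -> q \in [set a; b; c]) ->
  central q.
Proof.
move=> clS qS inS a b c abc aq; apply: inS => //.
apply: subset_trans (triangle_cluster abc) (cluster_sub clS _).
exact: subsetP (cluster_sub clS qS) a aq.
Qed.

(* A common neighbour of s and v is one of x, z, v, since these are the three
   neighbours of s when v is outside D. *)
Lemma tri_adj_apex (D : {set T}) x z s v :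
  x \in D -> z \in D -> {subset neighbours e x <= D} -> {subset neighbours e z <= D} ->
  x != z -> e s x -> e s z -> tri_adj s v -> v \in D.
Proof.
move=> xD zD Nx Nz xz sx sz /andP[sv /existsP[t /andP[st vt]]]; apply/contraT => vD.
have xv : x != v by apply: contraNneq vD => <-.
have zv : z != v by apply: contraNneq vD => <-.
have : t \in neighbours e s by rewrite inE.
rewrite (neighboursE sx sz sv xz xv zv) !inE -orbA => /or3P[]/eqP tE; subst t.
- by rewrite Nx ?inE 1?e_sym in vD.
- by rewrite Nz ?inE 1?e_sym in vD.
- by rewrite e_irr in vt.
Qed.

Lemma triangle_in_diamond x z s w a b c :
  ~~ e s w -> triangle e a b c -> [set a; b; c] \subset [set x; z; s; w] ->
  (x \in [set a; b; c]) && (z \in [set a; b; c]).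
Proof.
move=> sw [ab ac bc] /subsetP sub.
have esw : e s w = false := negbTE sw.
have ews : e w s = false by rewrite e_sym.
have := sub a; have := sub b; have := sub c; rewrite !inE !eqxx !orbT -!orbA.
move=> /(_ isT) /or4P[]/eqP cE /(_ isT) /or4P[]/eqP bE /(_ isT) /or4P[]/eqP aE;
  subst a b c; rewrite ?e_irr ?esw ?ews // in ab ac bc; by rewrite ?eqxx ?orbT.
Qed.

Lemma diamond_central x z s w :
  triangle e x z s -> triangle e x z w -> s != w -> central x /\ central z.
Proof.
move=> [xz xs zs] [_ xw zw] sw.
have nsw : ~~ e s w := K4_free xz xs xw zs zw.
set D := [set x; z; s; w].
have xD : x \in D by rewrite !inE eqxx.
have zD : z \in D by rewrite !inE eqxx orbT.
have Nx : {subset neighbours e x <= D}.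
  move=> y; rewrite (neighboursE xz xs xw (adj_neq zs) (adj_neq zw) sw) !inE -!orbA.
  by move=> ->; rewrite orbT.
have Nz : {subset neighbours e z <= D}.
  have zx : e z x by rewrite e_sym.
  move=> y; rewrite (neighboursE zx zs zw (adj_neq xs) (adj_neq xw) sw) !inE -!orbA.
  by case/or3P=> ->; rewrite ?orbT.
have xz' := adj_neq xz.
have clD u v : tri_adj u v -> u \in D -> v \in D.
  move=> uv; rewrite ![u \in _]inE -!orbA => /or4P[]/eqP uE; subst u.
  - by apply: Nx; rewrite inE; case/andP: uv.
  - by apply: Nz; rewrite inE; case/andP: uv.
  - by apply: (tri_adj_apex xD zD Nx Nz xz' _ _ uv); rewrite e_sym.
  - by apply: (tri_adj_apex xD zD Nx Nz xz' _ _ uv); rewrite e_sym.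
by split; apply: central_of_closed clD _ _ => // a b c abc
            /(triangle_in_diamond nsw abc) /andP[].
Qed.

Lemma triangle_exit_central x s1 s2 w :
  triangle e x s1 s2 -> tri_adj x w -> w != s1 -> w != s2 ->
  central x /\ (central s1 \/ central s2).
Proof.
move=> [xs1 xs2 s12] /andP[xw /existsP[z /andP[xz wz]]] ws1 ws2.
have : z \in neighbours e x by rewrite inE.
rewrite (neighboursE xs1 xs2 xw (adj_neq s12)) 1?eq_sym // !inE -orbA.
case/or3P=> /eqP zE; subst z.
- have s1w : e s1 w by rewrite e_sym.
  have [|cx cs1] := diamond_central (And3 xs1 xs2 s12) (And3 xs1 xw s1w).
    by rewrite eq_sym.
  by split=> //; left.
- have s2w : e s2 w by rewrite e_sym.
  have s21 : e s2 s1 by rewrite e_sym.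
  have [|cx cs2] := diamond_central (And3 xs2 xs1 s21) (And3 xs2 xw s2w).
    by rewrite eq_sym.
  by split=> //; right.
- by rewrite e_irr in wz.
Qed.

Lemma triangle_other_central y p q : triangle e y p q -> central p \/ central q.
Proof.
move=> ypq; set S := [set y; p; q].
have [/forall_inP clS | /forall_inPn[u uS /forallPn[w]]] :=
  boolP [forall u in S, forall v, tri_adj u v ==> (v \in S)].
  left; apply: (central_of_closed (S := S)) => [u v uv uS | | a b c abc sub].
  - exact: implyP (forallP (clS u uS) v) uv.
  - by rewrite !inE eqxx orbT.
  have [ab ac bc] := abc; have [yp yq pq] := ypq.
  have /eqP-> : [set a; b; c] == S.
    by rewrite eqEcard sub !cards3 ?adj_neq.
  by rewrite !inE eqxx orbT.
rewrite negb_imply !inE -!orbA !negb_or => /and4P[uw wy wp wq].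
move: uS; rewrite !inE -orbA => /or3P[]/eqP uE; subst u.
- by have [_] := triangle_exit_central ypq uw wp wq.
- by have [] := triangle_exit_central (triangle_rot ypq) uw wq wy; left.
- by have [] := triangle_exit_central (triangle_rot (triangle_rot ypq)) uw wy wp; right.
Qed.

Lemma central_mate y : exists y', [/\ connect tri_adj y y', y' != y & central y'].
Proof.
have [p [q ypq]] := triangle_through y.
have [yp yq _] := ypq.
have [cp | cq] := triangle_other_central ypq; [exists p | exists q].
  by split; [exact/connect1/(triangle_tri_adj ypq) | rewrite eq_sym adj_neq |].
by split; [exact/connect1/(triangle_tri_adj (triangle_swap ypq)) | rewrite eq_sym adj_neq |].
Qed.

Lemma outer_neighbour_uniq u w1 w2 :
  e u w1 -> e u w2 -> ~~ connect tri_adj u w1 -> ~~ connect tri_adj u w2 -> w1 = w2.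
Proof.
move=> uw1 uw2 n1 n2; have [p [q upq]] := triangle_through u.
have cp := connect1 (triangle_tri_adj upq).
have cq := connect1 (triangle_tri_adj (triangle_swap upq)).
have neq v : connect tri_adj u v -> v != w1 by apply: contraTneq => ->.
have [up uq pq] := upq.
have : w2 \in neighbours e u by rewrite inE.
rewrite (neighboursE up uq uw1 (adj_neq pq) (neq p cp) (neq q cq)) !inE -orbA.
by case/or3P=> /eqP w2E; rewrite // w2E ?cp ?cq in n2.
Qed.

Lemma central_transversal :
  exists Q : {set T}, [/\ forall x, #|cluster x :&: Q| = 1,
                         {in Q &, forall x y, ~~ e x y} & {in Q, forall x, central x}].
Proof.
exact: independent_good_transversal e_sym e_irr (@connect0 _ _)
  (sym_connect_sym tri_adj_sym) (@connect_trans _ _) central_mate outer_neighbour_uniq.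
Qed.

Lemma triangle_meets_transversal Q a b c :
  (forall x, #|cluster x :&: Q| = 1) -> {in Q, forall x, central x} ->
  triangle e a b c -> #|[set a; b; c] :&: Q| = 1.
Proof.
move=> clusterQ centralQ abc.
have /eqP/cards1P[q aQ] := clusterQ a.
have /setIP[qa qQ] : q \in cluster a :&: Q by rewrite aQ set11.
suff -> : [set a; b; c] :&: Q = [set q] by rewrite cards1.
apply/eqP; rewrite eqEsubset -{1}aQ setSI ?triangle_cluster //= sub1set inE qQ andbT.
apply: centralQ abc _ => //; rewrite inE (sym_connect_sym tri_adj_sym).
by rewrite inE in qa.
Qed.

End ClawFreeCubic.

Theorem lemma3p11 (T : finType) (e : rel T) :
  simple_graph e -> cubic e -> connected_graph e -> claw_free e -> ~ is_K4 e ->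
  exists P : {set T},
    vertex_cover e P /\
    (forall a b c : T, triangle e a b c -> #|[set a; b; c] :&: P| = 2).
Proof.
move=> [e_sym e_irr] e_cubic e_connected e_claw_free e_not_K4.
have [Q [clusterQ indepQ centralQ]] :=
  central_transversal e_sym e_irr e_cubic e_claw_free e_connected e_not_K4.
exists (~: Q); split=> [x y xy | a b c abc].
  by rewrite !inE -negb_and; apply: contraL xy => /andP[xQ yQ]; apply: indepQ.
have [ab ac bc] := abc.
rewrite -setDE cardsD (triangle_meets_transversal e_sym clusterQ centralQ abc).
by rewrite cards3 ?(adj_neq e_irr).
Qed.
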